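(* For every nonnegative integer $n$, \[ \sum_{k=0}^{2n}\frac{(-1)^k}{\binom{2n}{k}}H_{k}^2 =\frac{1+2n}{2+2n}\bigg\{H_{1+2n}^2-\frac{H_{1+2n}}{1+n} -H_{1+2n}^{\langle2\rangle}+H_{1+n}^{\langle2\rangle}\bigg\}. \]
   Context: For a nonnegative integer $m$, $H_m=\sum_{j=1}^m\frac1j$ and $H_m^{\langle2\rangle}=\sum_{j=1}^m\frac{1}{j^2}$ (both equal to $0$ when $m=0$). *)

From mathcomp Require Import all_boot all_order all_algebra.
Set Implicit Arguments. Unset Strict Implicit. Unset Printing Implicit Defensive.
Import Order.TTheory GRing.Theory Num.Theory.
Local Open Scope ring_scope.

Definition H (m : nat) : rat := \sum_(1 <= j < m.+1) (j%:R)^-1.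
Definition H2 (m : nat) : rat := \sum_(1 <= j < m.+1) (j%:R ^+ 2)^-1.

From mathcomp Require Import all_boot all_order all_algebra.
From mathcomp Require Import ring lra zify.
Import Order.TTheory GRing.Theory Num.Theory.
Local Open Scope ring_scope.

(* Write [T_M f] for [altinvbin M f = \sum_(k <= M) (-1)^k / 'C(M, k) * f k].
   Since [(M+1-k)/'C(M,k) = (M+1)/'C(M+1,k)] and
   [(k+1)/'C(M,k) = (M+1)/'C(M+1,k+1)], the sum
   [T_M ((M+1-k) f k + (k+1) f (k+1))] telescopes.  When
   [f (k+1) = f k + d k / (k+1)] this gives a linear relation between [T_M f]
   and [T_M d]; for [f = H] (with [d = 1]) and [f = H^2] (with
   [d = 2 H + 1/(k+1)]) it reduces the theorem to [T_M 1] and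
   [T_M (1/(k+1))].  The latter obeys a recurrence in [M] coming from
   [1/'C(M+1,k) = (M+1-k)/((M+1) 'C(M,k))], which over even [M] sums to
   [(2n+1) (H2 (2n+1) - H2 n)]. *)

Section InverseBinomialSums.
Context {R : numFieldType}.

Definition altinvbin (M : nat) (f : nat -> R) : R :=
  \sum_(0 <= k < M.+1) ((-1) ^+ k / ('C(M, k))%:R * f k).

Lemma binomial_natr_neq0 {m k : nat} : (k <= m)%N -> ('C(m, k)%:R : R) != 0.
Proof. by move=> le_km; rewrite pnatr_eq0 -lt0n bin_gt0. Qed.

Lemma eq_altinvbin M (f g : nat -> R) :
  (forall k, (k <= M)%N -> f k = g k) -> altinvbin M f = altinvbin M g.
Proof. by move=> efg; apply: eq_big_nat => k /andP[_ /efg ->]. Qed.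

Lemma altinvbin_comb M a b (f g : nat -> R) :
  altinvbin M (fun k => a * f k + b * g k)
  = a * altinvbin M f + b * altinvbin M g.
Proof.
by rewrite /altinvbin !mulr_sumr -big_split /=; apply: eq_bigr => k _; ring.
Qed.

Lemma altinvbin_telescope M (f : nat -> R) :
  altinvbin M (fun k => (M.+1 - k)%:R * f k + k.+1%:R * f k.+1)
  = M.+1%:R * (f 0%N - (-1) ^+ M.+1 * f M.+1).
Proof.
pose a k := (-1) ^+ k / ('C(M.+1, k))%:R * f k.
rewrite /altinvbin (telescope_sumr_eq (fun k => - (M.+1%:R * a k))) //.
  by rewrite /a bin0 binn expr0 invr1 !mulr1 !mul1r; ring.
move=> k /andP[_ le_kM]; rewrite /a.
have CM0 : ('C(M, k)%:R : R) != 0 by exact: binomial_natr_neq0.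
have CSM0 : ('C(M.+1, k)%:R : R) != 0 by exact/binomial_natr_neq0/ltnW.
have CSMS0 : ('C(M.+1, k.+1)%:R : R) != 0 by exact: binomial_natr_neq0.
have -> : ((M.+1 - k)%:R : R) = M.+1%:R * 'C(M, k)%:R / 'C(M.+1, k)%:R.
  by apply: (mulIf CSM0); rewrite mulfVK // -!natrM -mul_bin_down.
have -> : (k.+1%:R : R) = M.+1%:R * 'C(M, k)%:R / 'C(M.+1, k.+1)%:R.
  by apply: (mulIf CSMS0); rewrite mulfVK // -!natrM mul_bin_diag.
by rewrite exprS; field; rewrite CM0 CSM0 CSMS0.
Qed.

Lemma altinvbin_increments M (f d : nat -> R) :
  (forall k, (k <= M)%N -> f k.+1 = f k + d k / k.+1%:R) ->
  M.+2%:R * altinvbin M f + altinvbin M d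
  = M.+1%:R * (f 0%N - (-1) ^+ M.+1 * f M.+1).
Proof.
move=> fS; rewrite -altinvbin_telescope -[altinvbin M d]mul1r -altinvbin_comb.
apply: eq_altinvbin => k le_kM; rewrite fS //.
have -> : M.+2 = (M.+1 - k + k.+1)%N by lia.
by rewrite natrD; field; rewrite -mulrS pnatr_eq0.
Qed.

Lemma altinvbin_one M :
  altinvbin M (fun=> 1) = M.+1%:R * (1 - (-1) ^+ M.+1) / M.+2%:R.
Proof.
have := @altinvbin_increments M (fun=> 1) (fun=> 0).
have -> : altinvbin M (fun=> 0) = 0 by rewrite /altinvbin big1 // => k _; rewrite mulr0.
rewrite addr0 mulr1 => <- //; last by move=> k _; rewrite mul0r addr0.
by field; rewrite -natrD pnatr_eq0.
Qed.

Lemma altinvbinS M (f : nat -> R) :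
  altinvbin M.+1 f
  = altinvbin M (fun k => (M.+1 - k)%:R * f k) / M.+1%:R
    + (-1) ^+ M.+1 * f M.+1.
Proof.
rewrite {1}/altinvbin big_nat_recr //= binn divr1 mulr_suml.
congr (_ + _); apply: eq_big_nat => k /andP[_ le_kM].
have CM0 : ('C(M, k)%:R : R) != 0 by exact: binomial_natr_neq0.
have SMk_neq0 : ((M.+1 - k)%:R : R) != 0 by rewrite pnatr_eq0 subn_eq0 -ltnNge.
have -> : ('C(M.+1, k)%:R : R) = M.+1%:R * 'C(M, k)%:R / (M.+1 - k)%:R.
  by apply: (mulIf SMk_neq0); rewrite mulfVK // -!natrM mul_bin_down mulnC.
by field; rewrite CM0 SMk_neq0 -mulrS pnatr_eq0.
Qed.

Lemma altinvbin_recipS m :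
  altinvbin m.+1 (fun k => k.+1%:R^-1)
  = (m.+2%:R * altinvbin m (fun k => k.+1%:R^-1) - altinvbin m (fun=> 1))
    / m.+1%:R + (-1) ^+ m.+1 / m.+2%:R.
Proof.
rewrite altinvbinS.
have -> : m.+2%:R * altinvbin m (fun k => k.+1%:R^-1) - altinvbin m (fun=> 1)
  = altinvbin m (fun k => m.+2%:R * k.+1%:R^-1 + (-1) * 1).
  by rewrite altinvbin_comb; ring.
congr (_ / _ + _); apply: eq_altinvbin => k le_km.
have -> : m.+2 = (m.+1 - k + k.+1)%N by lia.
by rewrite natrD; field; rewrite -mulrS pnatr_eq0.
Qed.

End InverseBinomialSums.

Lemma solve_linear {F : fieldType} {a b c x : F} :
  a != 0 -> a * x + b = c -> x = (c - b) / a.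
Proof. by move=> a_neq0 <-; field. Qed.

Lemma HS k : H k.+1 = H k + k.+1%:R^-1.
Proof. by rewrite /H big_nat_recr. Qed.

Lemma H0 : H 0 = 0.
Proof. by rewrite /H big_geq. Qed.

Lemma H2S k : H2 k.+1 = H2 k + (k.+1%:R ^+ 2)^-1.
Proof. by rewrite /H2 big_nat_recr. Qed.

Lemma H20 : H2 0 = 0.
Proof. by rewrite /H2 big_geq. Qed.

Lemma signr_even {R : pzRingType} n : (-1) ^+ (2 * n) = 1 :> R.
Proof. by rewrite exprM sqrrN !expr1n. Qed.

Lemma altinvbin_H M :
  M.+2%:R * altinvbin M H + altinvbin M (fun=> 1)
  = - (M.+1%:R * (-1) ^+ M.+1 * H M.+1).
Proof.
rewrite (@altinvbin_increments _ M H (fun=> 1)) ?H0 => [|k _]; first by ring.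
by rewrite HS mul1r.
Qed.

Lemma altinvbin_Hsq M :
  M.+2%:R * altinvbin M (fun k => H k ^+ 2)
  + (2 * altinvbin M H + altinvbin M (fun k => k.+1%:R^-1))
  = - (M.+1%:R * (-1) ^+ M.+1 * H M.+1 ^+ 2).
Proof.
have -> : 2 * altinvbin M H + altinvbin M (fun k => k.+1%:R^-1)
  = altinvbin M (fun k => 2 * H k + 1 * k.+1%:R^-1).
  by rewrite altinvbin_comb mul1r.
rewrite altinvbin_increments ?H0 => [|k _]; first by ring.
by rewrite HS; field; rewrite -mulrS pnatr_eq0.
Qed.

Lemma altinvbin_recip_even n :
  altinvbin (2 * n) (fun k => k.+1%:R^-1) = (2 * n).+1%:R * (H2 (2 * n).+1 - H2 n).
Proof.
elim: n => [|n IHn].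
  by rewrite /altinvbin big_nat1 !H2S H20 expr0 bin0; field.
have -> : (2 * n.+1 = (2 * n).+2)%N by lia.
rewrite !altinvbin_recipS IHn !altinvbin_one !H2S !exprS signr_even.
have n_ge0 := ler0n rat n.
by field; rewrite !lt0r_neq0 //=; lra.
Qed.

Lemma altinvbin_H_even n :
  altinvbin (2 * n) H
  = (2 * n).+1%:R / (2 * n).+2%:R * (H (2 * n).+1 - 2 / (2 * n).+2%:R).
Proof.
rewrite (solve_linear _ (altinvbin_H _)) ?pnatr_eq0 //.
rewrite altinvbin_one !exprS signr_even.
have n_ge0 := ler0n rat n.
by field; rewrite !lt0r_neq0 //=; lra.
Qed.

Theorem proposition1 (n : nat) :
  \sum_(0 <= k < (2 * n).+1) ((-1) ^+ k / ('C(2 * n, k))%:R * H k ^+ 2)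
  = ((1 + 2 * n)%:R / (2 + 2 * n)%:R) *
    (H (1 + 2 * n) ^+ 2 - H (1 + 2 * n) / (1 + n)%:R
     - H2 (1 + 2 * n) + H2 (1 + n)).
Proof.
rewrite -/(altinvbin (2 * n) (fun k => H k ^+ 2)).
rewrite (solve_linear _ (altinvbin_Hsq _)) ?pnatr_eq0 //.
rewrite altinvbin_H_even altinvbin_recip_even [(-1) ^+ _]exprS signr_even.
rewrite !add1n add2n (H2S n).
have n_ge0 := ler0n rat n.
by field; rewrite !lt0r_neq0 //=; lra.
Qed.
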